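(* Let $\Gamma$ be a sizeable graph with partitions $A=A_0\sqcup A_1$, $B=B_0\sqcup B_1$ as in the definition of sizeable, such that each of the four defining subgraphs $\Gamma(A_s\sqcup B_t)$, $s,t\in\{0,1\}$, is a path. Then $\Gamma$ has at least $28$ vertices.
   Context: A simplicial graph $\Gamma$ is sizeable if it is bipartite on vertex sets $A$ and $B$, contains no cycle of length $4$, and there are partitions $A=A_0\sqcup A_1$, $B=B_0\sqcup B_1$ such that each induced subgraph $\Gamma(A_s\sqcup B_t)$, $s,t\in\{0,1\}$, is connected; these four induced subgraphs are the defining subgraphs. *)

(* A simple graph is a symmetric irreflexive relation e on a finType V. *)
From mathcomp Require Import all_boot.
Set Implicit Arguments. Unset Strict Implicit. Unset Printing Implicit Defensive.

Section Graphs.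
Variable V : finType.
Variable e : rel V.

Definition induced_rel (S : {set V}) : rel V :=
  [rel x y | [&& e x y, x \in S & y \in S]].

Definition induced_connected (S : {set V}) : Prop :=
  S != set0 /\ forall x y, x \in S -> y \in S -> connect (induced_rel S) x y.

(* the induced subgraph on S is a path graph P_n (n >= 1): its vertices can be
   listed without repetition as p_0, ..., p_{n-1} such that p_i ~ p_j iff |i-j| = 1 *)
Definition induced_path (S : {set V}) : Prop :=
  exists (x : V) (s : seq V),
    [/\ uniq (x :: s), S = [set y in x :: s] &
        forall i j, i < size (x :: s) -> j < size (x :: s) ->
          e (nth x (x :: s) i) (nth x (x :: s) j) = (i == j.+1) || (j == i.+1)].

Definition no_C4 : Prop :=
  ~ exists a b c d : V,
      [/\ uniq [:: a; b; c; d], e a b, e b c, e c d & e d a].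

Definition bipartite_on (A B : {set V}) : Prop :=
  [/\ A :|: B = setT, [disjoint A & B] &
      forall x y, e x y -> (x \in A) && (y \in B) || (x \in B) && (y \in A)].

Definition partition2 (S S0 S1 : {set V}) : Prop :=
  [/\ S = S0 :|: S1, [disjoint S0 & S1], S0 != set0 & S1 != set0].

Definition part (S0 S1 : {set V}) (s : bool) : {set V} := if s then S1 else S0.

Definition sizeable_with (A B A0 A1 B0 B1 : {set V}) : Prop :=
  [/\ bipartite_on A B, no_C4, partition2 A A0 A1, partition2 B B0 B1 &
      forall s t : bool, induced_connected (part A0 A1 s :|: part B0 B1 t)].

End Graphs.

(* Fix t. Since the path on A_s ∪ B_t alternates between its two sides, every
   b in B_t has one or two neighbours in A_s, and these degrees d_s(b) add up to
   |A_s| + |B_t| - 1, the number of edges of the path. As (d_0 - 2)(d_1 - 2) >= 0,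
   the number of paths a_0 - b - a_1 (a_s in A_s, b in B_t) is at least
   2(|A_0| + |A_1|) - 4. Without 4-cycles two vertices have at most one common
   neighbour, so summing over t gives 4(|A_0| + |A_1|) - 8 <= |A_0||A_1|, and
   this inequality forces |A| >= 14 once |A_0||A_1| >= |B| >= 2. By symmetry
   |B| >= 14 as well. *)

From mathcomp Require Import all_boot zify.
Set Implicit Arguments. Unset Strict Implicit. Unset Printing Implicit Defensive.

Definition independent (V : finType) (e : rel V) (X : {set V}) : Prop :=
  forall u v, u \in X -> v \in X -> ~~ e u v.

Definition deg_in (V : finType) (e : rel V) (X : {set V}) (y : V) : nat :=
  #|[set x in X | e x y]|.

Definition cherry_count (V : finType) (e : rel V) (X0 X1 W : {set V}) : nat :=
  \sum_(y in W) deg_in e X0 y * deg_in e X1 y.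

Lemma cardsU_disjoint (T : finType) (X Y : {set T}) :
  [disjoint X & Y] -> #|X :|: Y| = #|X| + #|Y|.
Proof. by move=> disj; rewrite cardsU (disjoint_setI0 disj) cards0 subn0. Qed.

Lemma count_iota_neighbours (n i : nat) : i < n ->
  count (fun j => (j == i.+1) || (i == j.+1)) (iota 0 n) = (0 < i) + (i.+1 < n).
Proof.
move=> lt_in.
have count_iota1 k : count (pred1 k) (iota 0 n) = (k < n).
  by rewrite count_uniq_mem ?iota_uniq // mem_iota.
have succ_i : count (pred1 i.+1) (iota 0 n) = (i.+1 < n) by exact: count_iota1.
have pred_i : count (fun j => i == j.+1) (iota 0 n) = (0 < i).
  case: i lt_in {succ_i} => [|k] lt_kn; first by rewrite (@eq_count _ _ pred0) ?count_pred0.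
  rewrite (@eq_count _ _ (pred1 k)); last by move=> j; rewrite /= eqSS eq_sym.
  by rewrite count_iota1 (ltnW lt_kn).
have := count_predUI (pred1 i.+1) (fun j => i == j.+1) (iota 0 n).
rewrite (@eq_count _ (predI _ _) pred0) ?count_pred0 ?addn0 ?succ_i ?pred_i.
  by rewrite addnC.
by move=> j /=; case: eqP => // ->; rewrite ltn_eqF.
Qed.

Lemma sum_alternating_path_deg (n : nat) (f : nat -> nat) :
  (forall i, i < n -> f i + f i.+1 = 1) ->
  \sum_(0 <= i < n.+1) f i * ((0 < i) + (i < n)) = n.
Proof.
move=> alt.
under eq_big_nat => i _ do rewrite mulnDr.
rewrite big_split /= big_nat_recl // big_nat_recr //= muln0 ltnn muln0 add0n addn0.
rewrite -big_split /= (eq_big_nat _ _ (F2 := fun _ => 1)) => [|i /andP[_ lt_in]].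
  by rewrite sum_nat_const_nat muln1 subn0.
by rewrite lt_in !muln1 addnC alt.
Qed.

Lemma pair_sum_ge14 (m n : nat) :
  2 <= m * n -> 4 * (m + n) <= m * n + 8 -> 14 <= m + n.
Proof.
(* With 4mn <= (m + n)^2, s := m + n satisfies s^2 - 16s + 32 >= 0, which fails
   for 3 <= s <= 13. *)
move=> mn_ge2 le_sum_prod; rewrite leqNgt; apply/negP => lt_s.
have s_ge3 : 3 <= m + n by nia.
have amgm : 4 * (m * n) <= (m + n) * (m + n).
  by case: (leqP m n) => [/subnK <- | /ltnW /subnK <-]; nia.
nia.
Qed.

Section InducedPath.
Variables (V : finType) (e : rel V) (x : V) (p : seq V).
Hypothesis p_uniq : uniq p.
Hypothesis p_adj : forall i j, i < size p -> j < size p ->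
  e (nth x p i) (nth x p j) = (i == j.+1) || (j == i.+1).

Lemma card_nbrs_nth i : i < size p ->
  #|[set z in p | e z (nth x p i)]| = (0 < i) + (i.+1 < size p).
Proof.
move=> lt_ip; rewrite -count_iota_neighbours //; set y := nth x p i.
have -> : #|[set z in p | e z y]| = count (e^~ y) p.
  rewrite -size_filter -(card_uniqP (filter_uniq _ p_uniq)).
  by apply: eq_card => z; rewrite inE mem_filter andbC.
rewrite -[in count _ p](mkseq_nth x p) count_map; apply: eq_in_count => j.
by rewrite mem_iota add0n /= => lt_jp; rewrite p_adj.
Qed.

Variables X Y : {set V}.
Hypotheses (XY_p : X :|: Y = [set z in p]) (XY_disj : [disjoint X & Y]).
Hypotheses (X_indep : independent e X) (Y_indep : independent e Y).

Lemma mem_path_parts z : (z \in p) = (z \in X) || (z \in Y).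
Proof. by rewrite -in_setU XY_p inE. Qed.

Lemma deg_in_nth i : i < size p -> nth x p i \in Y ->
  deg_in e X (nth x p i) = (0 < i) + (i.+1 < size p).
Proof.
move=> lt_ip Y_pi; rewrite -card_nbrs_nth //; apply: eq_card => z; rewrite !inE.
case: (boolP (e z _)) => [e_zp|]; rewrite ?andbF // !andbT mem_path_parts.
case: (boolP (z \in Y)) => [Yz|_]; last by rewrite orbF.
by rewrite (negbTE (Y_indep Yz Y_pi)) in e_zp.
Qed.

Lemma deg_in_le2 y : y \in Y -> deg_in e X y <= 2.
Proof.
move=> Yy; have p_y : y \in p by rewrite mem_path_parts Yy orbT.
by rewrite -(nth_index x p_y) deg_in_nth ?index_mem ?nth_index //; case: (_ < _); case: (_ < _).
Qed.

Lemma deg_in_gt0 y : X != set0 -> y \in Y -> 0 < deg_in e X y.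
Proof.
case/set0Pn=> x0 X_x0 Yy; have p_y : y \in p by rewrite mem_path_parts Yy orbT.
have p_gt1 : 1 < size p.
  have : #|[set x0; y]| <= size p.
    rewrite -(card_uniqP p_uniq) -cardsE; apply/subset_leq_card/subsetP => z.
    by rewrite !inE mem_path_parts => /orP[] /eqP ->; rewrite ?X_x0 ?Yy ?orbT.
  have neq_x0y : x0 != y by apply: contraTneq Yy => <-; rewrite (disjointFr XY_disj X_x0).
  by rewrite cards2 neq_x0y.
rewrite -(nth_index x p_y) deg_in_nth ?index_mem ?nth_index //.
by case: (index y p) => [|i] //=; rewrite p_gt1.
Qed.

Lemma sum_deg_in : \sum_(y in Y) deg_in e X y = (size p).-1.
Proof.
rewrite (eq_bigl (fun y => (y \in p) && (y \in Y))) => [|y]; last first.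
  by rewrite mem_path_parts; case: (y \in Y); rewrite ?orbT ?andbF.
rewrite big_mkcondr -big_uniq // (big_nth x).
rewrite (eq_big_nat _ _ (F2 := fun i => (nth x p i \in Y) * ((0 < i) + (i.+1 < size p))))
  => [|i /andP[_ lt_ip]]; last by case: ifP => Y_pi; rewrite ?deg_in_nth ?mul1n.
case def_n : (size p) => [|n]; first by rewrite big_geq.
apply: sum_alternating_path_deg => i lt_in.
have [lt_ip lt_Sip] : i < size p /\ i.+1 < size p by rewrite def_n ltnS (ltnW lt_in).
have e_i_Si : e (nth x p i) (nth x p i.+1) by rewrite p_adj // eqxx orbT.
have := mem_nth x lt_ip; have := mem_nth x lt_Sip; rewrite !mem_path_parts.
case: (boolP (_ \in Y)) => [Y_i|_]; case: (boolP (_ \in Y)) => [Y_Si|_] //=.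
  by rewrite (negbTE (Y_indep Y_i Y_Si)) in e_i_Si.
by rewrite !orbF => X_Si X_i; rewrite (negbTE (X_indep X_i X_Si)) in e_i_Si.
Qed.

Lemma card_path_parts : #|X| + #|Y| = size p.
Proof.
have -> : size p = #|[set z in p]| by rewrite cardsE (card_uniqP p_uniq).
by rewrite -XY_p cardsU_disjoint.
Qed.

End InducedPath.

Lemma induced_path_deg_in (V : finType) (e : rel V) (X Y : {set V}) :
  induced_path e (X :|: Y) -> [disjoint X & Y] -> independent e X -> independent e Y ->
  [/\ forall y, y \in Y -> deg_in e X y <= 2,
      X != set0 -> forall y, y \in Y -> 0 < deg_in e X y &
      \sum_(y in Y) deg_in e X y = #|X| + #|Y| - 1].
Proof.
move=> [x [s [p_uniq XY_p p_adj]]] XY_disj X_indep Y_indep.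
rewrite (card_path_parts p_uniq XY_p XY_disj) subn1; split=> [y Yy|X_ne y Yy|].
- exact (deg_in_le2 p_uniq p_adj XY_p Y_indep Yy).
- exact (deg_in_gt0 p_uniq p_adj XY_p XY_disj Y_indep X_ne Yy).
- exact (sum_deg_in p_uniq p_adj XY_p X_indep Y_indep).
Qed.

Section FourCycleFree.
Variables (V : finType) (e : rel V).
Hypotheses (e_sym : symmetric e) (e_irr : irreflexive e) (e_noC4 : no_C4 e).

Lemma card_common_nbrs_le1 u v : u != v -> #|[set y | e u y && e v y]| <= 1.
Proof.
move=> neq_uv; rewrite leqNgt; apply/negP => /card_gt1P [y1 [y2 [+ + neq_y12]]].
rewrite !inE => /andP[e_uy1 e_vy1] /andP[e_uy2 e_vy2].
have neq_e a b : e a b -> a != b by apply: contraTneq => ->; rewrite e_irr.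
apply: e_noC4; exists u, y1, v, y2; split; rewrite // 1?e_sym //=.
rewrite !inE !negb_or neq_uv neq_y12 (neq_e _ _ e_uy1) (neq_e _ _ e_uy2).
by rewrite eq_sym (neq_e _ _ e_vy1) (neq_e _ _ e_vy2).
Qed.

Lemma cherry_count_le (X0 X1 W : {set V}) :
  [disjoint X0 & X1] -> cherry_count e X0 X1 W <= #|X0| * #|X1|.
Proof.
move=> disj_X01; rewrite /cherry_count.
apply: (@leq_trans (\sum_y deg_in e X0 y * deg_in e X1 y)).
  by rewrite [leqRHS](bigID [in W]) leq_addr.
have deg_inE X y : deg_in e X y = \sum_(x in X) e x y.
  rewrite /deg_in -sum1_card (eq_bigl (fun x => (x \in X) && e x y)) => [|x]; last by rewrite inE.
  by rewrite big_mkcondr; apply: eq_bigr => x _; case: (e x y).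
under eq_bigr => y _ do rewrite !deg_inE big_distrl /=.
under eq_bigr => y _ do under eq_bigr => u _ do rewrite big_distrr /=.
rewrite exchange_big /=; under eq_bigr => u _ do rewrite exchange_big /=.
rewrite -sum_nat_const; apply: leq_sum => u X0u; rewrite -sum1_card.
apply: leq_sum => v X1v.
have neq_uv : u != v by apply: contraTneq X1v => <-; rewrite (disjointFr disj_X01 X0u).
rewrite (eq_bigr (fun y => ((e u y && e v y) : nat))); last by move=> y _; case: (e u y); case: (e v y).
by rewrite -big_mkcond sum1dep_card card_common_nbrs_le1.
Qed.

End FourCycleFree.

Lemma independentS (V : finType) (e : rel V) (X Y : {set V}) :
  X \subset Y -> independent e Y -> independent e X.
Proof. by move=> /subsetP sub_XY Y_indep u v /sub_XY Yu /sub_XY; apply: Y_indep. Qed.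

Lemma bipartite_on_sym (V : finType) (e : rel V) (A B : {set V}) :
  bipartite_on e A B -> bipartite_on e B A.
Proof.
by case=> cover disj bip; split=> [||x y /bip]; rewrite 1?setUC 1?disjoint_sym // orbC.
Qed.

Lemma bipartite_on_independent (V : finType) (e : rel V) (A B : {set V}) :
  bipartite_on e A B -> independent e A.
Proof.
case=> _ disj bip u v Au Av; apply/negP => /bip.
by rewrite (disjointFr disj Au) (disjointFr disj Av) !andbF.
Qed.

Lemma partition2_part_subset (V : finType) (S S0 S1 : {set V}) s :
  partition2 S S0 S1 -> part S0 S1 s \subset S.
Proof. by case=> -> _ _ _; case: s; rewrite ?subsetUl ?subsetUr. Qed.

Lemma partition2_part_neq0 (V : finType) (S S0 S1 : {set V}) s :
  partition2 S S0 S1 -> part S0 S1 s != set0.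
Proof. by case=> _ _ ? ?; case: s. Qed.

Lemma partition2_card (V : finType) (S S0 S1 : {set V}) :
  partition2 S S0 S1 -> #|S| = #|S0| + #|S1|.
Proof. by case=> -> disj _ _; rewrite cardsU_disjoint. Qed.

Section SizeablePaths.
Variables (V : finType) (e : rel V) (A B A0 A1 B0 B1 : {set V}).
Hypotheses (AB_bip : bipartite_on e A B).
Hypotheses (A_part : partition2 A A0 A1) (B_part : partition2 B B0 B1).
Hypothesis paths : forall s t, induced_path e (part A0 A1 s :|: part B0 B1 t).

Lemma part_deg_in s t :
  [/\ forall y, y \in part B0 B1 t -> 0 < deg_in e (part A0 A1 s) y <= 2 &
      \sum_(y in part B0 B1 t) deg_in e (part A0 A1 s) y =
        #|part A0 A1 s| + #|part B0 B1 t| - 1].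
Proof.
have [_ AB_disj _] := AB_bip.
have sub_A := partition2_part_subset s A_part.
have sub_B := partition2_part_subset t B_part.
have [le2 gt0 sum_deg] := induced_path_deg_in (paths s t)
  (disjointWl sub_A (disjointWr sub_B AB_disj))
  (independentS sub_A (bipartite_on_independent AB_bip))
  (independentS sub_B (bipartite_on_independent (bipartite_on_sym AB_bip))).
by split=> // y By; rewrite le2 ?gt0 ?(partition2_part_neq0 s A_part).
Qed.

Lemma cherry_count_ge t :
  2 * (#|A0| + #|A1|) <= cherry_count e A0 A1 (part B0 B1 t) + 4 /\
  #|part B0 B1 t| <= cherry_count e A0 A1 (part B0 B1 t).
Proof.
have [deg0 sum0] := part_deg_in false t; have [deg1 sum1] := part_deg_in true t.
have := partition2_part_neq0 t B_part; rewrite -card_gt0 => B_ne.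
split; last first.
  rewrite -sum1_card; apply: leq_sum => y By.
  by rewrite muln_gt0; case/andP: (deg0 y By) => -> _; case/andP: (deg1 y By).
have : 2 * \sum_(y in part B0 B1 t) (deg_in e A0 y + deg_in e A1 y) <=
         cherry_count e A0 A1 (part B0 B1 t) + 4 * #|part B0 B1 t|.
  rewrite big_distrr [4 * _]mulnC -sum_nat_const -big_split; apply: leq_sum => y By /=.
  by move: (deg0 y By) (deg1 y By) => /=; nia.
rewrite big_split sum0 sum1 /=; lia.
Qed.

Hypotheses (e_sym : symmetric e) (e_irr : irreflexive e) (e_noC4 : no_C4 e).

Lemma sizeable_paths_card_ge14 : 14 <= #|A|.
Proof.
move: (cherry_count_ge false) (cherry_count_ge true) => /= [lb0 B0_le] [lb1 B1_le].
have [_ A01_disj _ _] := A_part; have [B_cover B01_disj B0_ne B1_ne] := B_part.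
have cherries_le : cherry_count e A0 A1 B0 + cherry_count e A0 A1 B1 <= #|A0| * #|A1|.
  apply: leq_trans (cherry_count_le e_sym e_irr e_noC4 B A01_disj).
  by rewrite /cherry_count -bigU // B_cover; apply/eq_leq/eq_bigl => y; rewrite !inE.
move: B0_ne B1_ne; rewrite -!card_gt0 (partition2_card A_part) /= => B0_gt0 B1_gt0.
apply: pair_sum_ge14; lia.
Qed.

End SizeablePaths.

Theorem mainTheorem13 (V : finType) (e : rel V)
  (e_sym : symmetric e) (e_irr : irreflexive e)
  (A B A0 A1 B0 B1 : {set V}) :
  sizeable_with e A B A0 A1 B0 B1 ->
  (forall s t : bool, induced_path e (part A0 A1 s :|: part B0 B1 t)) ->
  28 <= #|V|.
Proof.
move=> [AB_bip e_noC4 A_part B_part _] paths.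
have BA_paths s t : induced_path e (part B0 B1 s :|: part A0 A1 t) by rewrite setUC.
have A_ge14 := sizeable_paths_card_ge14 AB_bip A_part B_part paths e_sym e_irr e_noC4.
have B_ge14 := sizeable_paths_card_ge14 (bipartite_on_sym AB_bip) B_part A_part BA_paths
  e_sym e_irr e_noC4.
have [AB_cover AB_disj _] := AB_bip.
rewrite -cardsT -AB_cover cardsU_disjoint //.
exact: leq_add A_ge14 B_ge14.
Qed.
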